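(* Let $m\ge2$ be an integer and let $A$ be a left brace with $A^{(3)}=A^{m+1}=\{0\}$. Let $a\in A$, and define $a_1=a$ and $a_{j+1}=a*a_j$ for $j\ge1$. Then \[S=\Bigl\{\sum_{k=1}^m t_ka_k\;\Big|\; t_k\in\mathbb{Z},\ 1\le k\le m\Bigr\}\] is the subbrace of $A$ generated by $a$.
   Context: A left brace $(A,+,\cdot)$ is a set $A$ with two binary operations such that $(A,+)$ is an abelian group, $(A,\cdot)$ is a group, and $a(b+c)=ab-a+ac$ for all $a,b,c\in A$. In a left brace, $a*b=-a+ab-b$. For subsets $L,M\subseteq A$, $L*M$ is the subgroup of $(A,+)$ generated by $\{l*m\mid l\in L,m\in M\}$. Set $A^{(1)}=A$, $A^{(r+1)}=A^{(r)}*A$, and $A^1=A$, $A^{r+1}=A*A^r$ for $r\ge1$. A subbrace is a subset that is a subgroup of both $(A,+)$ and $(A,\cdot)$; the subbrace generated by $a$ is the intersection of all subbraces containing $a$. *)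

From HB Require Import structures.
From mathcomp Require Import all_boot all_order all_algebra.
Set Implicit Arguments. Unset Strict Implicit. Unset Printing Implicit Defensive.
Import GRing.Theory.
Local Open Scope ring_scope.

Record left_brace (V : zmodType) := LeftBrace {
  bmul : V -> V -> V;
  binv : V -> V;
  bone : V;
  bmulA : forall x y z, bmul x (bmul y z) = bmul (bmul x y) z;
  bmul1x : forall x, bmul bone x = x;
  bmulx1 : forall x, bmul x bone = x;
  bmulVx : forall x, bmul (binv x) x = bone;
  bmulxV : forall x, bmul x (binv x) = bone;
  bdistr : forall a b c, bmul a (b + c) = bmul a b - a + bmul a c
}.

Section Brace.
Variables (V : zmodType) (B : left_brace V).

Definition bstar (a b : V) : V := - a + bmul B a b - b.

Definition add_subgroup (S : V -> Prop) : Prop :=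
  S 0 /\ (forall x y, S x -> S y -> S (x + y)) /\ (forall x, S x -> S (- x)).

Definition mul_subgroup (S : V -> Prop) : Prop :=
  S (bone B) /\ (forall x y, S x -> S y -> S (bmul B x y))
  /\ (forall x, S x -> S (binv B x)).

Definition bstar_set (L M : V -> Prop) : V -> Prop :=
  fun x => forall S : V -> Prop, add_subgroup S ->
    (forall l m, L l -> M m -> S (bstar l m)) -> S x.

Definition full_set : V -> Prop := fun _ => True.

Fixpoint right_series (r : nat) : V -> Prop :=
  match r with
  | 0%N | 1%N => full_set
  | r'.+1 => bstar_set (right_series r') full_set
  end.

Fixpoint left_series (r : nat) : V -> Prop :=
  match r with
  | 0%N | 1%N => full_set
  | r'.+1 => bstar_set full_set (left_series r')
  end.

Definition is_zero_set (S : V -> Prop) : Prop := forall x, S x <-> x = 0.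

Definition subbrace (S : V -> Prop) : Prop := add_subgroup S /\ mul_subgroup S.

Definition subbrace_gen (a : V) : V -> Prop :=
  fun x => forall S, subbrace S -> S a -> S x.

(* a_1 = a, a_{j+1} = a * a_j ; brace_seq a j = a_{j+1} *)
Definition brace_seq (a : V) (j : nat) : V := iter j (bstar a) a.

End Brace.

From HB Require Import structures.
From mathcomp Require Import all_boot all_order all_algebra.
Import GRing.Theory.
Local Open Scope ring_scope.

(* Every subbrace
   containing a is closed under *, so it contains all a_k and hence S; the
   point is that S is itself a subbrace.  The proof uses three tools:
   - the additive maps lambda_x(y) = -x + xy, with lambda_x lambda_y =
     lambda_{xy}, and y |-> x * y = lambda_x(y) - y, also additive;
   - A^(3) = 0: writing A^2 = A * A, one gets (u + v) * z = u * z for v in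
     A^2 and hence (x + y) * z = x * z + y * z + x * (y * z);
   - A^{m+1} = 0: every y satisfies y in A^{n} for some n with x * y one
     level deeper, which gives a descending induction principle.
   Since a_k lies in A^k, a_{m+1} = 0 and S is stable under a * _; the
   induction principle then gives (ta) * y in S for y in S, and as every
   x in S is ta modulo A^2 this yields S * S in S, so S is closed under the
   product xy = x + y + x * y.  Finally x^{-1} = -lambda_{x^{-1}}(x), and
   lambda_{x^{-1}}(y) = y - lambda_{x^{-1}}(x * y) together with the same
   induction gives closure under inverses.
   In the formal statement indices start at 0: [brace_seq B a k] is a_{k+1}. *)

Set Implicit Arguments.
Unset Strict Implicit.
Unset Printing Implicit Defensive.

Section AddSubgroup.
Variables (V : zmodType) (P : V -> Prop).
Hypothesis subP : add_subgroup P.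

Lemma add_subgroup0 : P 0.
Proof. by case: subP. Qed.

Lemma add_subgroupD x y : P x -> P y -> P (x + y).
Proof. by case: subP => _ [PD _]; apply: PD. Qed.

Lemma add_subgroupN x : P x -> P (- x).
Proof. by case: subP => _ [_ PN]; apply: PN. Qed.

Lemma add_subgroupB x y : P x -> P y -> P (x - y).
Proof. by move=> Px Py; apply: add_subgroupD => //; apply: add_subgroupN. Qed.

Lemma add_subgroup_addr x z : P z -> P (x + z) <-> P x.
Proof.
move=> Pz; split => [Pxz|Px]; last exact: add_subgroupD.
by rewrite -(addrK z x); apply: add_subgroupB.
Qed.

Lemma add_subgroup_mulrz x t : P x -> P (x *~ t).
Proof.
move=> Px; have Pn (n : nat) : P (x *+ n).
  elim: n => [|n IH]; first by rewrite mulr0n; apply: add_subgroup0.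
  by rewrite mulrS; apply: add_subgroupD.
case: t => n; first exact: Pn.
by rewrite NegzE mulrNz; apply: add_subgroupN; exact: (Pn n.+1).
Qed.

Lemma add_subgroup_sum n (F : 'I_n -> V) :
  (forall k, P (F k)) -> P (\sum_(k < n) F k).
Proof.
move=> PF; elim/big_rec: _ => [|k y _ Py]; first exact: add_subgroup0.
exact: add_subgroupD.
Qed.

End AddSubgroup.

Lemma add_subgroup_preim (V : zmodType) (f : {additive V -> V}) (P : V -> Prop) :
  add_subgroup P -> add_subgroup (fun y => P (f y)).
Proof.
move=> subP; split; first by rewrite raddf0; apply: add_subgroup0.
by split=> [x y Px Py|x Px]; rewrite ?raddfD ?raddfN;
  [apply: add_subgroupD|apply: add_subgroupN].
Qed.

Section IntSpan.
Variables (V : zmodType) (u : nat -> V) (m : nat).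

Definition int_span : V -> Prop :=
  fun x => exists t : 'I_m -> int, x = \sum_(k < m) u k *~ t k.

Lemma int_span_add_subgroup : add_subgroup int_span.
Proof.
split; first by exists (fun _ => 0); rewrite big1 // => k _; rewrite mulr0z.
split=> [_ _ [t ->] [t' ->]|_ [t ->]].
  exists (fun k => t k + t' k).
  by rewrite -big_split; apply: eq_bigr => k _; rewrite mulrzDr.
by exists (fun k => - t k); rewrite -sumrN; apply: eq_bigr => k _; rewrite mulrNz.
Qed.

Lemma int_span_gen k : (k < m)%N -> int_span (u k).
Proof.
move=> km; exists (fun j : 'I_m => ((j : nat) == k)%:R).
rewrite (bigD1 (Ordinal km)) //= eqxx mulr1z big1 ?addr0 // => j jk.
suff /negbTE -> : (j : nat) != k by rewrite mulr0z.
by apply: contra jk => /eqP jk; apply/eqP/val_inj.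
Qed.

Lemma int_span_min (P : V -> Prop) : add_subgroup P ->
  (forall k, (k < m)%N -> P (u k)) -> forall x, int_span x -> P x.
Proof.
move=> subP Pu _ [t ->]; apply: add_subgroup_sum => // k.
by apply: add_subgroup_mulrz => //; apply: Pu.
Qed.

Lemma int_span_additive (f : {additive V -> V}) :
  (forall k, (k < m)%N -> int_span (f (u k))) ->
  forall x, int_span x -> int_span (f x).
Proof.
exact: (int_span_min (add_subgroup_preim f int_span_add_subgroup)).
Qed.

End IntSpan.

Section BraceCalculus.
Variables (V : zmodType) (B : left_brace V).
Local Notation bm := (bmul B).
Local Notation bs := (bstar B).

Definition brace_lambda (x y : V) : V := - x + bm x y.

(* Distributivity at b = c = 0 gives x0 = x. *)
Lemma bmulx0 x : bm x 0 = x.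
Proof.
have := bdistr B x 0 0; rewrite addr0 -{1}(add0r (bm x 0)) => /addIr h.
by apply/subr0_eq; rewrite -h.
Qed.

Lemma bone0 : bone B = 0.
Proof. by rewrite -(bmulx0 (bone B)) bmul1x. Qed.

(* Each lambda_x is additive; this is the brace axiom rewritten. *)
Lemma brace_lambda_is_nmod_morphism x : nmod_morphism (brace_lambda x).
Proof.
split=> [|y z]; first by rewrite /brace_lambda bmulx0 addNr.
by rewrite /brace_lambda bdistr !addrA [- x + _]addrC.
Qed.

HB.instance Definition _ x :=
  GRing.isNmodMorphism.Build V V (brace_lambda x)
    (brace_lambda_is_nmod_morphism x).

Lemma bmul_lambda x y : bm x y = x + brace_lambda x y.
Proof. by rewrite addNKr. Qed.

Lemma brace_lambda_comp x y z :
  brace_lambda x (brace_lambda y z) = brace_lambda (bm x y) z.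
Proof.
rewrite [brace_lambda y z]/brace_lambda raddfD raddfN /= /brace_lambda bmulA.
by rewrite opprD opprK addrACA subrr add0r.
Qed.

Lemma brace_lambda0 z : brace_lambda 0 z = z.
Proof. by rewrite /brace_lambda oppr0 add0r -bone0 bmul1x. Qed.

Lemma brace_lambdaKV x y : brace_lambda x (brace_lambda (binv B x) y) = y.
Proof. by rewrite brace_lambda_comp bmulxV bone0 brace_lambda0. Qed.

Lemma bstarE x y : bs x y = brace_lambda x y - y.
Proof. by []. Qed.

Lemma brace_lambda_bstar x y : brace_lambda x y = y + bs x y.
Proof. by rewrite bstarE addrC subrK. Qed.

Lemma bstar_is_nmod_morphism x : nmod_morphism (bs x).
Proof.
split=> [|y z]; first by rewrite bstarE raddf0 subr0.
by rewrite !bstarE raddfD opprD addrACA.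
Qed.

HB.instance Definition _ x :=
  GRing.isNmodMorphism.Build V V (bs x) (bstar_is_nmod_morphism x).

Lemma bstar0x y : bs 0 y = 0.
Proof. by rewrite bstarE brace_lambda0 subrr. Qed.

Lemma bmul_bstar x y : bm x y = x + y + bs x y.
Proof. by rewrite bmul_lambda brace_lambda_bstar addrA. Qed.

Lemma brace_lambda_inv x y :
  brace_lambda (binv B x) y = y - brace_lambda (binv B x) (bs x y).
Proof.
rewrite bstarE raddfB /= brace_lambda_comp.
by rewrite bmulVx bone0 brace_lambda0 opprB addrC subrK.
Qed.

Lemma binvE x : binv B x = - brace_lambda (binv B x) x.
Proof. by rewrite /brace_lambda bmulVx bone0 addr0 opprK. Qed.

Lemma add_subgroup_bstar_set (L M : V -> Prop) : add_subgroup (bstar_set B L M).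
Proof.
split; first by move=> P subP _; apply: add_subgroup0.
split=> [x y Lx Ly|x Lx] P subP PLM.
  by apply: add_subgroupD => //; [apply: Lx|apply: Ly].
by apply: add_subgroupN => //; apply: Lx.
Qed.

Lemma bstar_set_mem (L M : V -> Prop) l m :
  L l -> M m -> bstar_set B L M (bs l m).
Proof. by move=> Ll Mm P _ PLM; apply: PLM. Qed.

Definition brace_square : V -> Prop := bstar_set B (@full_set V) (@full_set V).

Lemma subbrace_brace_seq (T : V -> Prop) a :
  subbrace B T -> T a -> forall k, T (brace_seq B a k).
Proof.
move=> [subT [_ [TM _]]] Ta; elim=> [|k IH] //=.
rewrite /bstar; apply: add_subgroupB => //.
by apply: add_subgroupD => //; [apply: add_subgroupN|apply: TM].
Qed.

Section RightNilpotent.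
Hypothesis H3 : is_zero_set (right_series B 3).

Lemma bstar_square w z : brace_square w -> bs w z = 0.
Proof. by move=> Aw; apply/H3; apply: bstar_set_mem. Qed.

(* Left multiplication under * only sees a class modulo A^2: writing
   u + v = u w with w = v + u^{-1} * v in A^2, one gets
   lambda_{u+v} = lambda_u lambda_w = lambda_u. *)
Lemma bstar_addl_square u v z : brace_square v -> bs (u + v) z = bs u z.
Proof.
move=> Av; set w := v + bs (binv B u) v.
have Aw : brace_square w.
  by apply: add_subgroupD (add_subgroup_bstar_set _ _) _ _ Av (bstar_set_mem _ _).
have uw : bm u w = u + v.
  rewrite bmul_lambda raddfD bstarE raddfB /= brace_lambdaKV.
  by rewrite [_ + (v - _)]addrC subrK.
by rewrite -uw !bstarE -brace_lambda_comp [brace_lambda w z]brace_lambda_bstar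
  bstar_square ?addr0.
Qed.

(* Left distributivity of * up to a correction term, from x + y = xy - x * y. *)
Lemma bstar_addl x y z : bs (x + y) z = bs x z + bs y z + bs x (bs y z).
Proof.
have Axy : brace_square (bs x y) by apply: bstar_set_mem.
rewrite -(bstar_addl_square (x + y) z Axy).
rewrite -bmul_bstar bstarE -brace_lambda_comp.
rewrite [brace_lambda y z]brace_lambda_bstar.
rewrite raddfD /= !brace_lambda_bstar.
by rewrite addrAC [z + _ - z]addrAC subrr add0r addrA.
Qed.

End RightNilpotent.

Lemma left_series_bstar n x y :
  left_series B n y -> left_series B n.+1 (bs x y).
Proof. by case: n => [|n] // Ly; apply: bstar_set_mem. Qed.

Lemma left_series_brace_seq a k : left_series B k.+1 (brace_seq B a k).
Proof. by elim: k => [|k IH] //; apply: left_series_bstar. Qed.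

(* Descending induction along a left series with A^n = 0: to prove P on Q
   it suffices to pass from x * y back to y, for a fixed x stabilising Q. *)
Lemma left_series_ind n (Hn : is_zero_set (left_series B n))
    (Q P : V -> Prop) x :
  P 0 -> (forall y, Q y -> Q (bs x y)) ->
  (forall y, Q y -> P (bs x y) -> P y) -> forall y, Q y -> P y.
Proof.
move=> P0 Qx PQ.
suff Pd d y : left_series B (n - d) y -> Q y -> P y.
  by move=> y; apply: (Pd n); rewrite subnn.
elim: d y => [|d IH] y; first by rewrite subn0 => /Hn ->.
move=> Ly Qy; apply: PQ (IH _ _ (Qx _ Qy)) => //.
case: (ltnP d n) => [dn|]; last by rewrite -subn_eq0 => /eqP ->.
by rewrite -subnSK //; apply: left_series_bstar.
Qed.

End BraceCalculus.

Section GeneratedSubbrace.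
Variables (V : zmodType) (B : left_brace V) (m : nat) (a : V).
Hypothesis H3 : is_zero_set (right_series B 3).
Hypothesis Hm : is_zero_set (left_series B m.+1).

Local Notation bs := (bstar B).
Local Notation a_ := (brace_seq B a).
Local Notation S := (int_span a_ m).

(* Since a_{m+1} lies in A^{m+1} = 0, S contains a_1, ..., a_{m+1}. *)
Lemma span_brace_seq k : (k <= m)%N -> S (a_ k).
Proof.
rewrite leq_eqVlt => /orP [/eqP ->|km]; last exact: int_span_gen.
have -> : a_ m = 0 by apply/Hm; apply: left_series_brace_seq.
exact: add_subgroup0 (int_span_add_subgroup _ _).
Qed.

(* S is stable under a * _, since a * a_k = a_{k+1}. *)
Lemma span_bstar_a y : S y -> S (bs a y).
Proof. by apply: int_span_additive => k km; exact: (@span_brace_seq k.+1). Qed.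

(* (ta) * y lies in S: induction on t, using (x + a) * y = x * y + a * y +
   x * (a * y), and descending induction on the depth of y. *)
Lemma span_bstar_multiple y : S y -> forall t, S (bs (a *~ t) y).
Proof.
have subS := int_span_add_subgroup a_ m.
move: y; apply: (left_series_ind Hm (x := a)) => [t|y|y Sy IH].
- by rewrite raddf0; apply: add_subgroup0.
- exact: span_bstar_a.
have shift t : S (bs (a *~ (t + 1)) y) <-> S (bs (a *~ t) y).
  rewrite mulrzDr mulr1z bstar_addl // -addrA; apply: add_subgroup_addr => //.
  exact: add_subgroupD (span_bstar_a Sy) (IH t).
elim/int_rec => [|n IHn|n IHn].
- by rewrite mulr0z bstar0x; exact: add_subgroup0.
- by rewrite -addn1 PoszD; apply/shift.
- by apply/(shift (- n.+1%:Z)); rewrite -addn1 PoszD opprD subrK.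
Qed.

Lemma span_decomp x :
  S x -> exists t v, brace_square B v /\ x = a *~ t + v.
Proof.
pose P y := exists t v, brace_square B v /\ y = a *~ t + v.
have subA := add_subgroup_bstar_set B (@full_set V) (@full_set V).
have subP : add_subgroup P.
  split; first by exists 0, 0; split; [exact: add_subgroup0|rewrite addr0].
  split=> [_ _ [t [v [Av ->]]] [t' [v' [Av' ->]]]|_ [t [v [Av ->]]]].
    exists (t + t'), (v + v'); split; first exact: (add_subgroupD subA Av Av').
    by rewrite mulrzDr addrACA.
  exists (- t), (- v); split; first exact: (add_subgroupN subA Av).
  by rewrite mulrNz opprD.
move: x; apply: (int_span_min subP) => -[|k] _.
- by exists 1, 0; split; [exact: add_subgroup0|rewrite addr0].
- by exists 0, (a_ k.+1); split; [exact: bstar_set_mem|rewrite add0r].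
Qed.

Lemma span_bstar x y : S x -> S y -> S (bs x y).
Proof.
move=> /span_decomp [t [v [Av ->]]] Sy.
by rewrite bstar_addl_square //; apply: span_bstar_multiple.
Qed.

Lemma span_bmul x y : S x -> S y -> S (bmul B x y).
Proof.
have subS := int_span_add_subgroup a_ m.
move=> Sx Sy; rewrite bmul_bstar.
by apply: (add_subgroupD subS); [apply: (add_subgroupD subS)|apply: span_bstar].
Qed.

Lemma span_lambda_inv x y : S x -> S y -> S (brace_lambda B (binv B x) y).
Proof.
have subS := int_span_add_subgroup a_ m.
move=> Sx; move: y; apply: (left_series_ind Hm (x := x)) => [|y|y Sy IH].
- by rewrite raddf0; apply: add_subgroup0.
- exact: span_bstar.
by rewrite brace_lambda_inv; apply: (add_subgroupB subS).
Qed.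

Lemma span_subbrace : subbrace B S.
Proof.
have subS := int_span_add_subgroup a_ m.
split=> //; split; first by rewrite bone0; apply: add_subgroup0.
split=> [|x Sx]; first exact: span_bmul.
by rewrite binvE; apply: (add_subgroupN subS); apply: span_lambda_inv.
Qed.

End GeneratedSubbrace.

Theorem theoremD (V : zmodType) (B : left_brace V) (m : nat) (hm : (2 <= m)%N)
  (H3 : is_zero_set (right_series B 3))
  (Hm : is_zero_set (left_series B m.+1))
  (a : V) :
  forall x : V,
    (exists t : 'I_m -> int, x = \sum_(k < m) (brace_seq B a k) *~ t k)
    <-> subbrace_gen B a x.
Proof.
move=> x; split=> [Sx T subT Ta|genx].
  apply: (int_span_min (u := brace_seq B a) _ _ Sx); first by case: subT.
  by move=> k _; apply: subbrace_brace_seq.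
apply: (genx (int_span (brace_seq B a) m)); first exact: span_subbrace.
exact: (span_brace_seq a Hm (leq0n m)).
Qed.
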